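(* Let $\mathcal{D}$ be a set of discounting functions and let $\varphi$ be an $\mathrm{LTL}^{\mathrm{disc}}[\mathcal{D}]$ formula. Then there exist LTL formulas $\varphi_{>0}$ and $\varphi_{<1}$ such that $|\varphi_{>0}|$ and $|\varphi_{<1}|$ are both $O(|\varphi|)$ and the following hold for every computation $\pi$: (1) if $[\![\pi,\varphi]\!]>0$ then $\pi\models\varphi_{>0}$, and if $[\![\pi,\varphi]\!]<1$ then $\pi\models\varphi_{<1}$; (2) if $\pi$ is a lasso computation, then $\pi\models\varphi_{>0}$ implies $[\![\pi,\varphi]\!]>0$, and $\pi\models\varphi_{<1}$ implies $[\![\pi,\varphi]\!]<1$.
   Context: Let $AP$ be a finite set of atomic propositions. A computation is an infinite word $\pi=\pi_0\pi_1\pi_2\cdots\in(2^{AP})^\omega$, and $\pi^i=\pi_i\pi_{i+1}\cdots$ denotes its suffix from position $i$. A lasso computation is a computation of the form $u\cdot v^\omega$ with $u,v\in(2^{AP})^*$ and $v\neq\epsilon$. A discounting function is a strictly decreasing function $\eta:\mathbb{N}\to[0,1]$ (where $\mathbb{N}=\{0,1,\dots\}$) with $\lim_{i\to\infty}\eta(i)=0$. For a set $\mathcal{D}$ of discounting functions, the formulas of $\mathrm{LTL}^{\mathrm{disc}}[\mathcal{D}]$ are given by the grammar $\varphi ::= \mathtt{True}\mid p\mid\neg\varphi\mid\varphi\vee\varphi\mid\mathsf{X}\varphi\mid\varphi\,\mathsf{U}\,\varphi\mid\varphi\,\mathsf{U}_\eta\,\varphi$ with $p\in AP$, $\eta\in\mathcal{D}$.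 The satisfaction value $[\![\pi,\varphi]\!]\in[0,1]$ is defined inductively: $[\![\pi,\mathtt{True}]\!]=1$; $[\![\pi,p]\!]=1$ if $p\in\pi_0$ and $0$ otherwise; $[\![\pi,\neg\varphi]\!]=1-[\![\pi,\varphi]\!]$; $[\![\pi,\varphi\vee\psi]\!]=\max\{[\![\pi,\varphi]\!],[\![\pi,\psi]\!]\}$; $[\![\pi,\mathsf{X}\varphi]\!]=[\![\pi^1,\varphi]\!]$; $[\![\pi,\varphi\,\mathsf{U}\,\psi]\!]=\sup_{i\ge0}\min\{[\![\pi^i,\psi]\!],\min_{0\le j<i}[\![\pi^j,\varphi]\!]\}$; $[\![\pi,\varphi\,\mathsf{U}_\eta\,\psi]\!]=\sup_{i\ge0}\min\{\eta(i)[\![\pi^i,\psi]\!],\min_{0\le j<i}\eta(j)[\![\pi^j,\varphi]\!]\}$. An LTL formula is a formula without $\mathsf{U}_\eta$ operators; its value is always in $\{0,1\}$, and $\pi\models\psi$ means $[\![\pi,\psi]\!]=1$ (standard LTL satisfaction). $|\varphi|$ denotes the number of subformulas of $\varphi$. *)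

From HB Require Import structures.
From mathcomp Require Import all_boot all_order all_algebra.
From mathcomp Require Import boolp classical_sets reals.
Set Implicit Arguments. Unset Strict Implicit. Unset Printing Implicit Defensive.
Import Order.TTheory GRing.Theory Num.Theory.
Local Open Scope ring_scope.
Local Open Scope classical_set_scope.

(* Formulas of LTL^disc[D]; the discount operators are indexed by an
   eqType D, interpreted by eta : D -> (nat -> R) (see the theorem). *)
Inductive dform (AP : finType) (D : eqType) : Type :=
  | FTrue
  | FAtom of AP
  | FNot of dform AP D
  | FOr of dform AP D & dform AP D
  | FNext of dform AP D
  | FUntil of dform AP D & dform AP D
  | FUntilD of D & dform AP D & dform AP D.
Arguments FTrue {AP D}.

Section Syntax.
Variables (AP : finType) (D : eqType).

Fixpoint form_eqb (f g : dform AP D) : bool :=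
  match f, g with
  | FTrue, FTrue => true
  | FAtom p, FAtom q => p == q
  | FNot f1, FNot g1 => form_eqb f1 g1
  | FOr f1 f2, FOr g1 g2 => form_eqb f1 g1 && form_eqb f2 g2
  | FNext f1, FNext g1 => form_eqb f1 g1
  | FUntil f1 f2, FUntil g1 g2 => form_eqb f1 g1 && form_eqb f2 g2
  | FUntilD d f1 f2, FUntilD e g1 g2 =>
      [&& d == e, form_eqb f1 g1 & form_eqb f2 g2]
  | _, _ => false
  end.

Lemma form_eqbP : Equality.axiom form_eqb.
Proof.
elim=> [|p|f1 IH1|f1 IH1 f2 IH2|f1 IH1|f1 IH1 f2 IH2|d f1 IH1 f2 IH2]
       [|q|g1|g1 g2|g1|g1 g2|e g1 g2] /=; try by constructor.
- by apply: (iffP eqP) => [->|[]].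
- by case: (IH1 g1) => [->|H]; constructor => // -[].
- case: (IH1 g1) => [->|H] /=; last by constructor => -[].
  by case: (IH2 g2) => [->|H]; constructor => // -[].
- by case: (IH1 g1) => [->|H]; constructor => // -[].
- case: (IH1 g1) => [->|H] /=; last by constructor => -[].
  by case: (IH2 g2) => [->|H]; constructor => // -[].
- case: (d =P e) => [->|H] /=; last by constructor => -[].
  case: (IH1 g1) => [->|H] /=; last by constructor => -[].
  by case: (IH2 g2) => [->|H]; constructor => // -[].
Qed.

HB.instance Definition _ := hasDecEq.Build (dform AP D) form_eqbP.

Fixpoint subforms (f : dform AP D) : seq (dform AP D) :=
  f :: match f with
       | FTrue | FAtom _ => [::]
       | FNot g | FNext g => subforms g
       | FOr g h | FUntil g h | FUntilD _ g h => subforms g ++ subforms h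
       end.

Definition fsize (f : dform AP D) : nat := size (undup (subforms f)).

Fixpoint is_ltl (f : dform AP D) : bool :=
  match f with
  | FTrue | FAtom _ => true
  | FNot g | FNext g => is_ltl g
  | FOr g h | FUntil g h => is_ltl g && is_ltl h
  | FUntilD _ _ _ => false
  end.
End Syntax.

Definition computation (AP : finType) := nat -> {set AP}.

Definition suffix (AP : finType) (pi : computation AP) (i : nat) : computation AP :=
  fun k => pi (i + k)%N.

Definition is_lasso (AP : finType) (pi : computation AP) : Prop :=
  exists (u v : seq {set AP}), v != [::] /\
    forall i : nat, pi i = if (i < size u)%N then nth finset.set0 u i
                           else nth finset.set0 v ((i - size u) %% size v).

Definition discounting (R : realType) (eta : nat -> R) : Prop :=
  (forall i, 0 <= eta i <= 1) /\
  (forall i j : nat, (i < j)%N -> eta j < eta i) /\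
  (forall e : R, 0 < e -> exists N : nat, forall i, (N <= i)%N -> eta i < e).

Fixpoint dval (R : realType) (AP : finType) (D : eqType) (eta : D -> nat -> R)
    (f : dform AP D) (pi : computation AP) : R :=
  match f with
  | FTrue => 1
  | FAtom p => if p \in pi 0%N then 1 else 0
  | FNot g => 1 - dval eta g pi
  | FOr g h => Order.max (dval eta g pi) (dval eta h pi)
  | FNext g => dval eta g (suffix pi 1)
  | FUntil g h =>
      sup [set x | exists i : nat,
             x = Order.min (dval eta h (suffix pi i))
                   (\big[Order.min/1]_(j < i) dval eta g (suffix pi j))]
  | FUntilD d g h =>
      sup [set x | exists i : nat,
             x = Order.min (eta d i * dval eta h (suffix pi i))
                   (\big[Order.min/1]_(j < i) (eta d j * dval eta g (suffix pi j)))]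
  end.

Definition models (R : realType) (AP : finType) (D : eqType) (eta : D -> nat -> R)
    (pi : computation AP) (f : dform AP D) : Prop := dval eta f pi = 1.

From Pilot Require Import Defs.
From mathcomp Require Import all_boot all_order all_algebra.
From mathcomp Require Import boolp classical_sets reals.
From mathcomp Require Import lra zify.
Import Order.TTheory GRing.Theory Num.Theory.
Local Open Scope ring_scope.
Local Open Scope classical_set_scope.
Set Implicit Arguments. Unset Strict Implicit.

(* The formulas [f_{>0}] and [f_{<1}] are built by structural recursion, negation
   swapping them.  The value of [g U h] is positive iff at some position [h] is
   positive and [g] was positive before, which is LTL until of the positivity
   formulas.  It equals 1 as soon as such a position has [h] and [g] equal to 1;
   the converse needs the supremum to be attained, which holds on lasso
   computations since they have finitely many suffixes.  For [g U_eta h], the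
   factors [eta i] are positive, so positivity is that of [g U h]; and since
   [eta i <= eta 1 < 1] for [i > 0], the value is below 1 iff
   [eta 0 * [[h]] < 1].  Each node adds at most five subformulas. *)

Section UntilValue.
Variable R : realType.
Implicit Types a b : nat -> R.

Definition in01 a := forall i, 0 <= a i <= 1.

Definition premin a i := \big[Order.min/1]_(j < i) a j.

Definition until_vals a b := [set x : R | exists i, x = Order.min (b i) (premin a i)].

Definition until_val a b := sup (until_vals a b).

Lemma premin0 a : premin a 0 = 1.
Proof. by rewrite /premin big_ord0. Qed.

Lemma premin_le a i j : (j < i)%N -> premin a i <= a j.
Proof. by move=> ji; exact: (bigmin_le _ (Ordinal ji)). Qed.

Lemma premin_nonincr a i j : (j <= i)%N -> premin a i <= premin a j.
Proof. exact: (le_bigmin_ord xpredT). Qed.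

Lemma premin_gt0 a i : 0 < premin a i <-> forall j, (j < i)%N -> 0 < a j.
Proof.
split=> [/bigmin_gtP[_ a_pos] j ji|a_pos]; first exact: (a_pos (Ordinal ji)).
by apply/bigmin_gtP; split=> [|j _]; [exact: ltr01|exact: a_pos].
Qed.

Lemma premin_eq1 a i : (forall j, (j < i)%N -> a j = 1) -> premin a i = 1.
Proof. by move=> a1; apply: bigmin_eq_id => j _; rewrite a1. Qed.

Lemma premin_in01 a i : in01 a -> 0 <= premin a i <= 1.
Proof.
move=> a01; rewrite bigmin_le_id andbT.
by apply/bigmin_geP; split=> [|j _]; [exact: ler01|case/andP: (a01 j)].
Qed.

Section UnitSequences.
Variables a b : nat -> R.
Hypotheses (a01 : in01 a) (b01 : in01 b).

Lemma until_vals_in01 x : until_vals a b x -> 0 <= x <= 1.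
Proof.
case=> i ->; have /andP[? ?] := premin_in01 i a01; have /andP[? ?] := b01 i.
by rewrite le_min ge_min; apply/andP; split; [apply/andP|apply/orP; left].
Qed.

Lemma until_vals_ub x : until_vals a b x -> x <= until_val a b.
Proof. by apply: ub_le_sup; exists 1 => y /until_vals_in01 /andP[]. Qed.

Lemma until_vals_nonempty : until_vals a b !=set0.
Proof. by exists (Order.min (b 0%N) (premin a 0)), 0%N. Qed.

Lemma until_val_le x : (forall y, until_vals a b y -> y <= x) -> until_val a b <= x.
Proof. exact: ge_sup until_vals_nonempty. Qed.

Lemma until_val_in01 : 0 <= until_val a b <= 1.
Proof.
have /andP[x0 _] := until_vals_in01 (ex_intro _ 0%N erefl).
rewrite (le_trans x0 (until_vals_ub (ex_intro _ 0%N erefl))) /=.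
by apply: until_val_le => y /until_vals_in01 /andP[].
Qed.

Lemma until_val_gt0 :
  0 < until_val a b <-> exists i, 0 < b i /\ forall j, (j < i)%N -> 0 < a j.
Proof.
split=> [/(sup_gt until_vals_nonempty)[_ [i ->]]|[i [bi_pos a_pos]]].
  by rewrite lt_min => /andP[bi_pos /premin_gt0 a_pos]; exists i.
apply: lt_le_trans (until_vals_ub (ex_intro _ i erefl)).
by rewrite lt_min bi_pos; apply/premin_gt0.
Qed.

Lemma until_val_eq1 :
  (exists i, b i = 1 /\ forall j, (j < i)%N -> a j = 1) -> until_val a b = 1.
Proof.
case=> i [bi1 a1]; apply/le_anti; case/andP: until_val_in01 => _ -> /=.
by apply: le_trans (until_vals_ub (ex_intro _ i erefl)); rewrite bi1 premin_eq1 ?minxx.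
Qed.

(* The hypothesis makes the supremum a maximum over the indices [<= N]. *)
Lemma until_val_eq1_witness N :
  (forall i, exists i', [/\ (i' <= i)%N, (i' <= N)%N & b i' = b i]) ->
  until_val a b = 1 -> exists i, b i = 1 /\ forall j, (j < i)%N -> a j = 1.
Proof.
move=> b_rec U1; pose e i := Order.min (b i) (premin a i).
case: (@arg_maxP _ _ 'I_N.+1 ord0 xpredT (fun k => e k) isT) => k _ k_max.
have : until_val a b <= e k.
  apply: until_val_le => _ [i ->]; have [i' [i'i i'N <-]] := b_rec i.
  apply: le_trans (k_max (Ordinal (i'N : i' < N.+1)%N) isT).
  by rewrite le_min !ge_min lexx premin_nonincr // orbT.
rewrite U1 le_min => /andP[bk1 ak1].
exists k; split; first by apply/le_anti; rewrite bk1 andbT; case/andP: (b01 k).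
move=> j jk; apply/le_anti; case/andP: (a01 j) => _ -> /=.
exact: le_trans ak1 (premin_le a jk).
Qed.

Lemma until_val_lt1 c : (forall i, (0 < i)%N -> b i <= c) -> c < 1 ->
  until_val a b < 1 <-> b 0%N < 1.
Proof.
move=> b_le c_lt1.
have b0_le : b 0%N <= until_val a b.
  have := until_vals_ub (ex_intro _ 0%N erefl).
  by rewrite premin0 (min_idPl _) //; case/andP: (b01 0%N).
split=> [/(le_lt_trans b0_le)//|b0_lt1].
apply: (@le_lt_trans _ _ (Order.max (b 0%N) c)); last by rewrite gt_max b0_lt1.
apply: until_val_le => _ [[|i] ->]; first by rewrite le_max ge_min lexx.
by rewrite le_max !ge_min (b_le i.+1) ?orbT.
Qed.

End UnitSequences.

End UntilValue.

(* Plain [suffix] would resolve to [seq.suffix]. *)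
Local Notation sfx := Defs.suffix.

Section Computations.
Variable AP : finType.
Implicit Type pi : computation AP.

Definition eventually_periodic pi :=
  exists s p, (0 < p)%N /\ forall i, (s <= i)%N -> pi (i + p)%N = pi i.

Lemma eventually_periodic_suffix pi k :
  eventually_periodic pi -> eventually_periodic (sfx pi k).
Proof.
case=> s [p [p_pos pi_per]]; exists s, p; split=> // i si.
by rewrite /Defs.suffix addnA pi_per //; lia.
Qed.

Lemma lasso_eventually_periodic pi : is_lasso pi -> eventually_periodic pi.
Proof.
case=> u [v [v_nil pi_uv]]; exists (size u), (size v).
split=> [|i ui]; first by rewrite lt0n size_eq0.
rewrite !pi_uv !ltnNge ui (leq_trans ui (leq_addr _ _)) /=.
by rewrite -addnBAC // modnDr.
Qed.

Lemma eventually_periodic_suffixes pi : eventually_periodic pi ->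
  exists N, forall i, exists i', [/\ (i' <= i)%N, (i' <= N)%N & sfx pi i' = sfx pi i].
Proof.
case=> s [p [p_pos pi_per]]; exists (s + p)%N; elim/ltn_ind=> i IH.
have [iN|Ni] := leqP i (s + p); first by exists i.
have [i' [i'i i'N pi_i']] := IH (i - p)%N ltac:(lia).
exists i'; split; [lia|lia|rewrite pi_i'; apply: funext => k].
by rewrite /Defs.suffix -pi_per; [congr pi|]; lia.
Qed.

End Computations.

Section Discounting.
Variable R : realType.
Variable e : nat -> R.
Hypothesis e_disc : discounting e.

Lemma discounting_gt0 i : 0 < e i.
Proof.
case: e_disc => e01 [e_decr _].
by apply: le_lt_trans (e_decr i i.+1 (ltnSn i)); case/andP: (e01 i.+1).
Qed.

Lemma discounting_le1 i : (0 < i)%N -> e i <= e 1%N.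
Proof.
case: e_disc => _ [e_decr _]; case: i => [|[|i]] // _.
exact/ltW/e_decr.
Qed.

Lemma discounting1_lt1 : e 1%N < 1.
Proof.
case: e_disc => e01 [e_decr _].
by apply: lt_le_trans (e_decr 0%N 1%N isT) _; case/andP: (e01 0%N).
Qed.

Lemma in01_discounted a : in01 a -> in01 (fun i => e i * a i).
Proof.
move=> a01 i; case: e_disc => e01 _.
case/andP: (e01 i) => e0 e1; case/andP: (a01 i) => a0 a1.
by rewrite mulr_ge0 //= mulr_ile1.
Qed.

Lemma until_val_discounted_gt0 a b : in01 a -> in01 b ->
  0 < until_val (fun i => e i * a i) (fun i => e i * b i) <-> 0 < until_val a b.
Proof.
move=> a01 b01; rewrite !until_val_gt0 //; try exact: in01_discounted.
have eM x i : (0 < e i * x) = (0 < x) by rewrite pmulr_rgt0 ?discounting_gt0.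
split=> -[i [bi aj]]; exists i; split=> [|j /aj].
- by rewrite -(eM _ i).
- by rewrite eM.
- by rewrite eM.
- by rewrite -(eM _ j).
Qed.

Lemma until_val_discounted_lt1 a b : in01 a -> in01 b ->
  until_val (fun i => e i * a i) (fun i => e i * b i) < 1 <-> e 0%N * b 0%N < 1.
Proof.
move=> a01 b01; apply: (until_val_lt1 _ _ _ discounting1_lt1); try exact: in01_discounted.
move=> i i_pos; case/andP: (b01 i) => b0 b1; case/andP: (e_disc.1 i) => e0 e1.
by apply: le_trans (discounting_le1 i_pos); rewrite ler_piMr.
Qed.

End Discounting.

Section Semantics.
Variables (R : realType) (AP : finType) (D : eqType) (eta : D -> nat -> R).
Hypothesis eta_disc : forall d, discounting (eta d).
Implicit Types (f g h : dform AP D) (pi : computation AP).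

Local Notation val := (dval eta).
Local Notation "pi |= f" := (models eta pi f) (at level 70).

Definition dseq f pi : nat -> R := fun i => val f (sfx pi i).

Lemma dval_or g h pi : val (FOr g h) pi = Order.max (val g pi) (val h pi).
Proof. by []. Qed.

Lemma dval_until g h pi : val (FUntil g h) pi = until_val (dseq g pi) (dseq h pi).
Proof. by []. Qed.

Lemma dval_untilD d g h pi : val (FUntilD d g h) pi =
  until_val (fun i => eta d i * dseq g pi i) (fun i => eta d i * dseq h pi i).
Proof. by []. Qed.

Lemma dval_in01 f pi : 0 <= val f pi <= 1.
Proof.
elim: f pi => [|p|g IH|g IHg h IHh|g IH|g IHg h IHh|d g IHg h IHh] pi;
  rewrite ?dval_until ?dval_untilD /=.
- by rewrite ler01 lexx.
- by case: ifP; rewrite ?lexx ?ler01.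
- by case/andP: (IH pi) => g0 g1; lra.
- by rewrite le_max ge_max; case/andP: (IHg pi) => -> ->; case/andP: (IHh pi) => -> ->.
- exact: IH.
- by apply: until_val_in01 => i; [exact: IHg|exact: IHh].
- by apply: until_val_in01; apply: in01_discounted => // i; [exact: IHg|exact: IHh].
Qed.

Lemma dseq_in01 f pi : in01 (dseq f pi).
Proof. by move=> i; exact: dval_in01. Qed.

Lemma models_Nlt1 f pi : pi |= f <-> ~ val f pi < 1.
Proof.
case/andP: (dval_in01 f pi) => _ f_le1.
rewrite /models; split=> [->|f_Nlt1]; first by rewrite ltxx.
by apply/le_anti; rewrite f_le1 leNgt; apply/negP.
Qed.

Lemma ltl_dval01 f pi : is_ltl f -> val f pi = 0 \/ val f pi = 1.
Proof.
elim: f pi => [|p|g IH|g IHg h IHh|g IH|g IHg h IHh|//] pi; rewrite ?dval_until /=.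
- by right.
- by case: ifP; [right|left].
- by move=> /(IH pi)[] ->; [right|left]; lra.
- by case/andP=> /(IHg pi)[]-> /(IHh pi)[]->;
    rewrite ?maxxx ?(max_idPr ler01) ?(max_idPl ler01); [left|right..].
- exact: IH.
- case/andP=> g_ltl h_ltl.
  have val_gt0 f' : (forall p, val f' p = 0 \/ val f' p = 1) ->
      forall p, 0 < val f' p -> val f' p = 1.
    by move=> f01 p; case: (f01 p) => ->; rewrite ?ltxx.
  have [g01 h01] := (dseq_in01 g pi, dseq_in01 h pi).
  have [/(until_val_gt0 g01 h01) [i [hi gj]]|U_le0] := ltP 0 (until_val (dseq g pi) (dseq h pi)).
    right; apply: until_val_eq1 => //; exists i; split=> [|j /gj];
      apply: val_gt0 => // p; [exact: IHh|exact: IHg].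
  by left; apply/le_anti; rewrite U_le0; case/andP: (until_val_in01 g01 h01).
Qed.

Lemma models_gt0 f pi : is_ltl f -> pi |= f <-> 0 < val f pi.
Proof.
by move=> /(ltl_dval01 pi); rewrite /models => -[]->; split; lra.
Qed.

Lemma models_not f pi : is_ltl f -> pi |= FNot f <-> ~ pi |= f.
Proof.
by move=> /(ltl_dval01 pi); rewrite /models /= => -[]->; split; lra.
Qed.

Lemma models_or f g pi : pi |= FOr f g <-> pi |= f \/ pi |= g.
Proof.
rewrite /models /= maxEle.
case/andP: (dval_in01 f pi) => ? ?; case/andP: (dval_in01 g pi) => ? ?.
by case: leP => ?; split=> [|[]]; lra.
Qed.

Lemma models_and f g pi : is_ltl f -> is_ltl g ->
  pi |= FNot (FOr (FNot f) (FNot g)) <-> pi |= f /\ pi |= g.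
Proof.
move=> f_ltl g_ltl; rewrite models_not /= ?f_ltl // models_or !models_not //.
by split=> [/not_orP[/contrapT ? /contrapT ?]|[? ?] []].
Qed.

Lemma models_until f g pi : is_ltl f -> is_ltl g ->
  pi |= FUntil f g <-> exists i, sfx pi i |= g /\ forall j, (j < i)%N -> sfx pi j |= f.
Proof.
move=> f_ltl g_ltl; rewrite models_gt0 /= ?f_ltl // -/(val (FUntil f g) pi) dval_until.
rewrite until_val_gt0; try exact: dseq_in01.
split=> -[i [gi fj]]; exists i; split=> [|j /fj];
  by [apply/models_gt0 | move/(models_gt0 _ f_ltl)].
Qed.

Lemma models_not_lt1 f f' pi : is_ltl f' ->
  (val f pi < 1 -> pi |= f') -> pi |= FNot f' -> pi |= f.
Proof. by move=> f'_ltl f_f' /(models_not _ f'_ltl) Nf'; apply/models_Nlt1 => /f_f'. Qed.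

Section UntilTransfer.
Variables (g h g' h' : dform AP D) (pi : computation AP).
Hypotheses (g'_ltl : is_ltl g') (h'_ltl : is_ltl h').

Lemma until_gt0_models :
  (forall i, 0 < dseq g pi i -> sfx pi i |= g') ->
  (forall i, 0 < dseq h pi i -> sfx pi i |= h') ->
  0 < val (FUntil g h) pi -> pi |= FUntil g' h'.
Proof.
move=> g_g' h_h'; rewrite dval_until until_val_gt0; try exact: dseq_in01.
by case=> i [hi gj]; apply/models_until => //; exists i; split=> [|j /gj]; auto.
Qed.

Lemma models_until_gt0 :
  (forall i, sfx pi i |= g' -> 0 < dseq g pi i) ->
  (forall i, sfx pi i |= h' -> 0 < dseq h pi i) ->
  pi |= FUntil g' h' -> 0 < val (FUntil g h) pi.
Proof.
move=> g'_g h'_h /models_until[//|//|i [hi gj]].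
by rewrite dval_until until_val_gt0; try exact: dseq_in01; exists i; split=> [|j /gj]; auto.
Qed.

Lemma until_lt1_models :
  (forall i, dseq g pi i < 1 -> sfx pi i |= g') ->
  (forall i, dseq h pi i < 1 -> sfx pi i |= h') ->
  val (FUntil g h) pi < 1 -> pi |= FNot (FUntil (FNot g') (FNot h')).
Proof.
move=> g_g' h_h' U_lt1; apply/models_not; first by rewrite /= g'_ltl.
case/models_until=> [||i [hi gj]] //; move: U_lt1.
rewrite dval_until until_val_eq1 ?ltxx //; try exact: dseq_in01.
by exists i; split=> [|j /gj]; apply: models_not_lt1; auto.
Qed.

Lemma models_until_lt1 : eventually_periodic pi ->
  (forall i, sfx pi i |= g' -> dseq g pi i < 1) ->
  (forall i, sfx pi i |= h' -> dseq h pi i < 1) ->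
  pi |= FNot (FUntil (FNot g') (FNot h')) -> val (FUntil g h) pi < 1.
Proof.
move=> pi_per g'_g h'_h /models_not N_until.
case: (boolP (val (FUntil g h) pi < 1)) => // /negP /models_Nlt1.
rewrite /models dval_until => U1; case: N_until; first by rewrite /= g'_ltl.
have [N sfx_rec] := eventually_periodic_suffixes pi_per.
have h_rec i : exists i', [/\ (i' <= i)%N, (i' <= N)%N & dseq h pi i' = dseq h pi i].
  by have [i' [i'i i'N sfx_eq]] := sfx_rec i; exists i'; rewrite /dseq sfx_eq.
have [i [hi gj]] := until_val_eq1_witness (dseq_in01 g pi) (dseq_in01 h pi) h_rec U1.
apply/models_until => //; exists i; split=> [|j /gj gj1]; apply/models_not => //.
- by move/h'_h; rewrite hi ltxx.
- by move/g'_g; rewrite gj1 ltxx.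
Qed.

End UntilTransfer.

Lemma dval_untilD_gt0 d g h pi :
  0 < val (FUntilD d g h) pi <-> 0 < val (FUntil g h) pi.
Proof. by rewrite dval_untilD dval_until until_val_discounted_gt0 //; exact: dseq_in01. Qed.

Lemma dval_untilD_lt1 d g h pi :
  val (FUntilD d g h) pi < 1 <-> eta d 0%N * val h pi < 1.
Proof.
by rewrite dval_untilD until_val_discounted_lt1 //; try exact: dseq_in01.
Qed.

(* [(approx f).1] is [f_{>0}] and [(approx f).2] is [f_{<1}]. *)
Fixpoint approx f : dform AP D * dform AP D :=
  match f with
  | FTrue => (FTrue, FNot FTrue)
  | FAtom p => (FAtom D p, FNot (FAtom D p))
  | FNot g => ((approx g).2, (approx g).1)
  | FOr g h => (FOr (approx g).1 (approx h).1,
                FNot (FOr (FNot (approx g).2) (FNot (approx h).2)))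
  | FNext g => (FNext (approx g).1, FNext (approx g).2)
  | FUntil g h => (FUntil (approx g).1 (approx h).1,
                   FNot (FUntil (FNot (approx g).2) (FNot (approx h).2)))
  | FUntilD d g h => (FUntil (approx g).1 (approx h).1,
                      if eta d 0%N == 1 then (approx h).2 else FTrue)
  end.

Lemma approx_ltl f : is_ltl (approx f).1 && is_ltl (approx f).2.
Proof.
elim: f => [|p|g|g IHg h IHh|g|g IHg h IHh|d g IHg h IHh] //=; first by rewrite andbC.
all: case/andP: IHg => -> g2; case/andP: IHh => -> h2; rewrite ?g2 ?h2 //.
by case: ifP.
Qed.

Lemma approx_pos_ltl f : is_ltl (approx f).1.
Proof. by case/andP: (approx_ltl f). Qed.

Lemma approx_lt1_ltl f : is_ltl (approx f).2.
Proof. by case/andP: (approx_ltl f). Qed.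

Lemma approx_complete f pi :
  (0 < val f pi -> pi |= (approx f).1) /\ (val f pi < 1 -> pi |= (approx f).2).
Proof.
elim: f pi => [|p|g IH|g IHg h IHh|g IH|g IHg h IHh|d g IHg h IHh] pi.
- by rewrite /models /=; split; lra.
- by rewrite /models /=; case: ifP; split; lra.
- case: (IH pi) => g_pos g_lt1; have := dval_in01 g pi.
  by case/andP=> ? ?; split=> /= ?; [apply: g_lt1|apply: g_pos]; lra.
- case: (IHg pi) (IHh pi) => [g_pos g_lt1] [h_pos h_lt1]; rewrite dval_or; split.
  + by rewrite lt_max => /orP[/g_pos|/h_pos] ?; rewrite [(approx _).1]/=; apply/models_or; [left|right].
  + rewrite gt_max => /andP[/g_lt1 ? /h_lt1 ?].
    by rewrite [(approx _).2]/=; apply/models_and => //; exact: approx_lt1_ltl.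
- exact: IH.
- split; [apply: until_gt0_models|apply: until_lt1_models];
    rewrite ?approx_pos_ltl ?approx_lt1_ltl // => i; [exact: (IHg _).1|exact: (IHh _).1|
    exact: (IHg _).2|exact: (IHh _).2].
- rewrite dval_untilD_gt0 dval_untilD_lt1; split.
    apply: until_gt0_models; rewrite ?approx_pos_ltl // => i; [exact: (IHg _).1|exact: (IHh _).1].
  rewrite [(approx _).2]/=; case: eqP => [-> | _ _]; last by [].
  by rewrite mul1r; exact: (IHh pi).2.
Qed.

Lemma approx_sound f pi : eventually_periodic pi ->
  (pi |= (approx f).1 -> 0 < val f pi) /\ (pi |= (approx f).2 -> val f pi < 1).
Proof.
elim: f pi => [|p|g IH|g IHg h IHh|g IH|g IHg h IHh|d g IHg h IHh] pi pi_per.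
- by rewrite /models /=; split; lra.
- by rewrite /models /=; case: ifP; split; lra.
- case: (IH pi pi_per) => g_pos g_lt1; case/andP: (dval_in01 g pi) => ? ?.
  by split=> [/g_lt1|/g_pos] /=; lra.
- case: (IHg pi pi_per) (IHh pi pi_per) => [g_pos g_lt1] [h_pos h_lt1]; rewrite dval_or.
  split.
    by rewrite [(approx _).1]/= lt_max => /models_or[/g_pos|/h_pos] ->; rewrite ?orbT.
  rewrite [(approx _).2]/= gt_max => /models_and[||/g_lt1 -> /h_lt1 ->] //;
    exact: approx_lt1_ltl.
- exact: IH (eventually_periodic_suffix 1 pi_per).
- have IHg_sfx i := IHg (sfx pi i) (eventually_periodic_suffix i pi_per).
  have IHh_sfx i := IHh (sfx pi i) (eventually_periodic_suffix i pi_per).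
  split; [apply: models_until_gt0|apply: models_until_lt1];
    rewrite ?approx_pos_ltl ?approx_lt1_ltl // => i;
    [exact: (IHg_sfx i).1|exact: (IHh_sfx i).1|exact: (IHg_sfx i).2|exact: (IHh_sfx i).2].
- rewrite dval_untilD_gt0 dval_untilD_lt1; split.
    apply: models_until_gt0; rewrite ?approx_pos_ltl // => i.
      exact: (IHg _ (eventually_periodic_suffix i pi_per)).1.
    exact: (IHh _ (eventually_periodic_suffix i pi_per)).1.
  rewrite [(approx _).2]/=; case: eqP => [-> | eta0_neq1 _].
    by rewrite mul1r; exact: (IHh pi pi_per).2.
  have /andP[eta0_ge0 eta0_le1] := (eta_disc d).1 0%N.
  have eta0_lt1 : eta d 0%N < 1 by rewrite lt_neqAle eta0_le1 andbT; apply/eqP.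
  by case/andP: (dval_in01 h pi) => ? ?; nra.
Qed.

Definition approx_new f : seq (dform AP D) :=
  match f with
  | FTrue | FAtom _ | FNext _ => [:: (approx f).1; (approx f).2]
  | FNot _ => [::]
  | FOr g h => [:: (approx f).1; (approx f).2;
                   FOr (FNot (approx g).2) (FNot (approx h).2);
                   FNot (approx g).2; FNot (approx h).2]
  | FUntil g h => [:: (approx f).1; (approx f).2;
                      FUntil (FNot (approx g).2) (FNot (approx h).2);
                      FNot (approx g).2; FNot (approx h).2]
  | FUntilD _ _ _ => [:: (approx f).1; FTrue]
  end.

Definition approx_forms f : seq (dform AP D) := flatten (map approx_new (subforms f)).

Lemma approx_forms_sub f f' :
  {subset subforms f <= subforms f'} -> {subset approx_forms f <= approx_forms f'}.
Proof.
move=> ff' x /flatten_mapP[g g_f x_g]; apply/flatten_mapP; exists g => //; exact: ff'.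
Qed.

Lemma approx_new_sub f : {subset approx_new f <= approx_forms f}.
Proof.
move=> x x_new; apply/flatten_mapP; exists f => //.
by case: f {x_new} => *; exact: mem_head.
Qed.

Lemma approx_forms_cover f :
  all (mem (approx_forms f)) (subforms (approx f).1) &&
  all (mem (approx_forms f)) (subforms (approx f).2).
Proof.
have new f' x : x \in approx_new f' -> x \in approx_forms f' := @approx_new_sub f' x.
have child f' g : {subset subforms g <= behead (subforms f')} ->
    {subset approx_forms g <= approx_forms f'}.
  by move=> g_f'; apply: approx_forms_sub => x /g_f' /mem_behead.
have childl g h : {subset subforms g <= subforms g ++ subforms h}.
  by move=> x x_g; rewrite mem_cat x_g.
have childr g h : {subset subforms h <= subforms g ++ subforms h}.
  by move=> x x_h; rewrite mem_cat x_h orbT.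
elim: f => [|p|g IH|g IHg h IHh|g IH|g IHg h IHh|d g IHg h IHh].
- by [].
- by rewrite /= !new // !inE eqxx ?orbT.
- have Sg := child (FNot g) g (fun x => id).
  by case/andP: IH => /(sub_all Sg) g1 /(sub_all Sg) g2; rewrite /= g1 g2.
- have Sg := child (FOr g h) g (childl g h); have Sh := child (FOr g h) h (childr g h).
  case/andP: IHg => /(sub_all Sg) g1 /(sub_all Sg) g2.
  case/andP: IHh => /(sub_all Sh) h1 /(sub_all Sh) h2.
  by rewrite /= !all_cat /= g1 g2 h1 h2 !new //= !inE eqxx ?orbT.
- have Sg := child (FNext g) g (fun x => id).
  case/andP: IH => /(sub_all Sg) g1 /(sub_all Sg) g2.
  by rewrite /= g1 g2 !new //= !inE eqxx ?orbT.
- have Sg := child (FUntil g h) g (childl g h); have Sh := child (FUntil g h) h (childr g h).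
  case/andP: IHg => /(sub_all Sg) g1 /(sub_all Sg) g2.
  case/andP: IHh => /(sub_all Sh) h1 /(sub_all Sh) h2.
  by rewrite /= !all_cat /= g1 g2 h1 h2 !new //= !inE eqxx ?orbT.
- have Sg := child (FUntilD d g h) g (childl g h).
  have Sh := child (FUntilD d g h) h (childr g h).
  case/andP: IHg => /(sub_all Sg) g1 _; case/andP: IHh => /(sub_all Sh) h1 /(sub_all Sh) h2.
  rewrite /= !all_cat g1 h1 !new //= ?inE ?eqxx //.
  by case: ifP => _; rewrite /= ?h2 ?new ?inE ?eqxx ?orbT.
Qed.

Lemma fsize_le_approx_forms f X :
  all (mem (approx_forms f)) (subforms X) -> (fsize X <= 5 * fsize f)%N.
Proof.
move=> /allP X_f; rewrite /fsize.
apply: leq_trans (_ : size (flatten (map approx_new (undup (subforms f)))) <= _)%N.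
  apply: uniq_leq_size (undup_uniq _) _ => x; rewrite mem_undup => /X_f.
  by case/flatten_mapP => g g_f x_g; apply/flatten_mapP; exists g; rewrite ?mem_undup.
elim: (undup _) => //= g s IH; rewrite size_cat mulnS leq_add //; by case: g.
Qed.

Lemma fsize_approx f :
  (fsize (approx f).1 <= 5 * fsize f)%N /\ (fsize (approx f).2 <= 5 * fsize f)%N.
Proof. by case/andP: (approx_forms_cover f) => /fsize_le_approx_forms ? /fsize_le_approx_forms. Qed.

End Semantics.

Theorem lemma1 :
  exists C : nat,
  forall (R : realType) (AP : finType) (D : eqType) (eta : D -> nat -> R),
    injective eta ->
    (forall d, discounting (eta d)) ->
  forall phi : dform AP D,
  exists phi_pos phi_lt1 : dform AP D,
    [/\ is_ltl phi_pos, is_ltl phi_lt1,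
        (fsize phi_pos <= C * fsize phi)%N,
        (fsize phi_lt1 <= C * fsize phi)%N &
    forall pi : computation AP,
      [/\ 0 < dval eta phi pi -> models eta pi phi_pos,
          dval eta phi pi < 1 -> models eta pi phi_lt1,
          is_lasso pi -> models eta pi phi_pos -> 0 < dval eta phi pi &
          is_lasso pi -> models eta pi phi_lt1 -> dval eta phi pi < 1]].
Proof.
exists 5%N => R AP D eta _ eta_disc phi.
exists (approx eta phi).1, (approx eta phi).2.
have [size_pos size_lt1] := fsize_approx eta phi.
split; rewrite ?approx_pos_ltl ?approx_lt1_ltl // => pi.
have [complete_pos complete_lt1] := approx_complete eta_disc phi pi.
split=> // /lasso_eventually_periodic pi_per;
  [exact: (approx_sound eta_disc phi pi_per).1|exact: (approx_sound eta_disc phi pi_per).2].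
Qed.
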